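(* Let $P$ be an Eulerian poset and $I\subset P$ a proper ideal. Then $\mathrm{Bier}(P,I)$ is an Eulerian poset.
   Context: A graded poset (bounded, all maximal chains of equal length) is Eulerian if every interval $[x,y]$ with $x<y$ contains equally many elements of odd rank and of even rank. A proper ideal $I$ of $P$ is a nonempty down-closed subset different from $P$. The Bier poset $\mathrm{Bier}(P,I)$ consists of all intervals $[x,y]$ of $P$ with $x\in I$, $y\notin I$, ordered by reversed inclusion ($[x',y']\le[x,y]$ iff $x'\le x<y\le y'$), together with an additional top element $\hat1$. *)

From HB Require Import structures.
From mathcomp Require Import all_boot all_order.
Set Implicit Arguments. Unset Strict Implicit. Unset Printing Implicit Defensive.
Import Order.TTheory.
Local Open Scope order_scope.

Section GenericPoset.
Variables (T : finType) (A : {set T}) (le : rel T).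

Definition is_poset : Prop :=
  [/\ {in A, forall x, le x x},
      {in A &, forall x y, le x y -> le y x -> x = y} &
      {in A & &, forall x y z, le x y -> le y z -> le x z}].

Definition lt_rel (x y : T) : bool := (x != y) && le x y.

Definition is_bounded : Prop :=
  exists2 b, b \in A & exists2 t, t \in A &
    {in A, forall z, le b z && le z t}.

Definition is_chain (C : {set T}) : bool :=
  (C \subset A) && [forall x in C, forall y in C, le x y || le y x].

Definition is_maximal_chain (C : {set T}) : bool :=
  is_chain C && [forall D : {set T}, is_chain D ==> (C \subset D) ==> (D == C)].

Definition is_graded : Prop :=
  forall C D : {set T}, is_maximal_chain C -> is_maximal_chain D -> #|C| = #|D|.

Definition rank (x : T) : nat :=
  (\max_(C : {set T} | is_chain C && [forall z in C, le z x]) #|C|).-1.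

Definition Eulerian : Prop :=
  [/\ is_poset, is_bounded, is_graded &
      {in A &, forall x y, lt_rel x y ->
         #|[set z in A | le x z && le z y && odd (rank z)]| =
         #|[set z in A | le x z && le z y && ~~ odd (rank z)]| }].

End GenericPoset.

Definition proper_ideal {d} {P : finPOrderType d} (I : {set P}) : Prop :=
  [/\ I != set0, I != setT & forall x y : P, y \in I -> x <= y -> x \in I].

(* Bier poset: the element [Some (x, y)] stands for the interval [x,y] and
   [None] for the adjoined top element 1^. *)
Definition Bier_carrier {d} {P : finPOrderType d} (I : {set P})
  : {set option (P * P)} :=
  [set u | if u is Some (x, y) then [&& x \in I, y \notin I & x <= y] else true].

Definition Bier_le {d} {P : finPOrderType d} (u v : option (P * P)) : bool :=
  match u, v with
  | _, None => true
  | None, Some _ => false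
  | Some (x', y'), Some (x, y) => (x' <= x) && (y <= y')
  end.

From HB Require Import structures.
From mathcomp Require Import all_boot all_order ssralg ssrnum ssrint zify.
Set Implicit Arguments. Unset Strict Implicit. Unset Printing Implicit Defensive.
Import Order.TTheory GRing.Theory Num.Theory.

(* Let n be the rank of P.  The map sending [a, c] to rank a + (n - rank c)
   and the adjoined top to n is strictly monotone on Bier(P, I) and never
   jumps by more than one across a covering pair; such a map is necessarily
   the rank function, and it forces all maximal chains to have n + 1 elements.
   The Euler condition is the vanishing of the signed sum of (-1)^rank over
   every nontrivial interval.  An interval between two intervals of P is the
   product [a, a'] x [c', c] of two intervals of P, so its signed sum factors
   and vanishes.  For an interval reaching the top, the sum over pairs
   (x, y) with x in I and y outside I is turned, by the Euler relation on
   [x, c], into minus the sum over y in I; exchanging the summations, the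
   Euler relation on [a, y] collapses this to -1, which cancels the top. *)

Definition sgn (k : nat) : int := ((-1) ^+ k)%R.

Lemma sgnD m k : sgn (m + k) = (sgn m * sgn k)%R.
Proof. exact: exprD. Qed.

Lemma sgn_sq k : (sgn k * sgn k = 1)%R.
Proof. by rewrite -sgnD addnn -mul2n /sgn exprM sqrrN expr1n. Qed.

Lemma sgnB n k : k <= n -> sgn (n - k) = (sgn n * sgn k)%R.
Proof. by move=> kn; rewrite -{2}(subnK kn) sgnD -mulrA sgn_sq mulr1. Qed.

Lemma sum_sgn (T : finType) (A : {set T}) (Q : pred T) (f : T -> nat) :
  (\sum_(z in A | Q z) sgn (f z))%R =
  (#|[set z in A | Q z && ~~ odd (f z)]|%:R -
   #|[set z in A | Q z && odd (f z)]|%:R)%R.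
Proof.
rewrite (bigID (fun z => odd (f z))) /= addrC -!sumr_const -sumrN.
congr (_ + _)%R; apply: eq_big => [z|z /andP[_ oz]]; rewrite ?inE ?andbA //.
  by rewrite /sgn -signr_odd (negbTE oz).
by rewrite /sgn -signr_odd oz.
Qed.

Lemma sum_sgn_eq0 (T : finType) (A : {set T}) (Q : pred T) (f : T -> nat) :
  ((\sum_(z in A | Q z) sgn (f z))%R == 0%R) =
  (#|[set z in A | Q z && odd (f z)]| == #|[set z in A | Q z && ~~ odd (f z)]|).
Proof. by rewrite sum_sgn subr_eq0 eqr_nat eq_sym. Qed.

Lemma card_le_inj_bounded (T : finType) (C : {set T}) (r : T -> nat) n :
  {in C &, injective r} -> {in C, forall c, r c <= n} -> #|C| <= n.+1.
Proof.
move=> r_inj r_le; rewrite cardE -(size_map r) -(size_iota 0 n.+1).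
apply: uniq_leq_size => [|k /mapP[c]]; rewrite ?mem_enum.
  by rewrite map_inj_in_uniq ?enum_uniq // => x y; rewrite !mem_enum; apply: r_inj.
by move=> /r_le cn ->; rewrite mem_iota.
Qed.

Lemma card_ge_onto (T : finType) (C : {set T}) (r : T -> nat) n :
  (forall k, k <= n -> exists2 c, c \in C & r c = k) -> n.+1 <= #|C|.
Proof.
move=> r_onto; rewrite cardE -(size_map r) -(size_iota 0 n.+1).
apply: uniq_leq_size (iota_uniq 0 n.+1) _ => k.
by rewrite mem_iota ltnS => /r_onto[c cC <-]; apply: map_f; rewrite mem_enum.
Qed.

Section Poset.
Variables (T : finType) (A : {set T}) (le : rel T).

Definition chain_below (z : T) (C : {set T}) : bool :=
  is_chain A le C && [forall w in C, le w z].

Lemma is_chainP (C : {set T}) :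
  reflect (C \subset A /\ {in C &, forall x y, le x y || le y x}) (is_chain A le C).
Proof.
apply: (iffP andP) => [[sCA /forall_inP cmp]|[sCA cmp]]; split => //.
  by move=> x y xC yC; have /forall_inP := cmp x xC; apply.
by apply/forall_inP => x xC; apply/forall_inP => y yC; apply: cmp.
Qed.

Lemma chain_belowP z (C : {set T}) :
  reflect (is_chain A le C /\ {in C, forall w, le w z}) (chain_below z C).
Proof. by apply: (iffP andP) => -[cC /forall_inP bC]; split. Qed.

Lemma is_maximal_chainP (E : {set T}) :
  reflect (is_chain A le E /\ forall D, is_chain A le D -> E \subset D -> D = E)
    (is_maximal_chain A le E).
Proof.
apply: (iffP andP) => [[cE /forallP maxE]|[cE maxE]]; split => //.
  by move=> D cD sED; have := maxE D; rewrite cD sED => /eqP.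
by apply/forallP => D; apply/implyP => cD; apply/implyP => /(maxE D cD) ->.
Qed.

Lemma sub_chain (C D : {set T}) : is_chain A le C -> D \subset C -> is_chain A le D.
Proof.
move=> /is_chainP[sCA cmp] sDC; apply/is_chainP; split; first exact: subset_trans sCA.
by move=> x y /(subsetP sDC) xC /(subsetP sDC); apply: cmp.
Qed.

Lemma maximal_chain_exists (C : {set T}) :
  is_chain A le C -> exists2 E, is_maximal_chain A le E & C \subset E.
Proof.
move=> cC; pose Q D := is_chain A le D && (C \subset D).
have QC : 0 < #|Q| by apply/card_gt0P; exists C; rewrite unfold_in /Q cC subxx.
have [E /andP[cE sCE] maxE] := eq_bigmax_cond (fun D : {set T} => #|D|) QC.
exists E => //; apply/is_maximal_chainP; split => // D cD sED.
apply/eqP; rewrite eq_sym eqEcard sED -maxE /=.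
by apply: (leq_bigmax_cond (P := Q)); rewrite /Q cD (subset_trans sCE).
Qed.

Hypothesis po : is_poset A le.
Let le_refl_in : {in A, forall x, le x x}.
Proof. by case: po. Qed.
Let le_anti_in : {in A &, forall x y, le x y -> le y x -> x = y}.
Proof. by case: po. Qed.
Let le_trans_in : {in A & &, forall x y z, le x y -> le y z -> le x z}.
Proof. by case: po. Qed.

Lemma chainU1 (C : {set T}) x :
  is_chain A le C -> x \in A -> {in C, forall c, le c x || le x c} ->
  is_chain A le (x |: C).
Proof.
move=> /is_chainP[sCA cmp] xA cmpx; apply/is_chainP; split.
  by rewrite subUset sub1set xA.
move=> u v /setU1P[->|uC] /setU1P[->|vC].
- by rewrite le_refl_in.
- by rewrite orbC cmpx.
- by rewrite cmpx.
- exact: cmp.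
Qed.

Lemma maximal_chain_mem (E : {set T}) x :
  is_maximal_chain A le E -> x \in A -> {in E, forall e, le e x || le x e} ->
  x \in E.
Proof.
move=> /is_maximal_chainP[cE maxE] xA cmpx.
by rewrite -(maxE _ (chainU1 cE xA cmpx) (subsetUr _ _)) setU11.
Qed.

Lemma chain_below_setU1 x y (C : {set T}) :
  x \in A -> y \in A -> le x y -> chain_below x C -> chain_below y (y |: C).
Proof.
move=> xA yA lxy /chain_belowP[cC bC]; have /is_chainP[sCA _] := cC.
have lCy : {in C, forall c, le c y}.
  by move=> c cC0; apply: (le_trans_in (subsetP sCA c cC0) xA yA (bC c cC0)).
apply/chain_belowP; split; first by apply: chainU1 => // c /lCy ->.
by move=> w /setU1P[->|/lCy //]; apply: le_refl_in.
Qed.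

Lemma card_chain_below_le z (C : {set T}) :
  chain_below z C -> #|C| <= (rank A le z).+1.
Proof.
move=> bC; apply: leq_trans (leqSpred _).
exact: (leq_bigmax_cond (P := chain_below z)).
Qed.

Lemma longest_chain_below z :
  z \in A -> exists2 L, chain_below z L & #|L| = (rank A le z).+1.
Proof.
move=> zA; have bz : chain_below z [set z].
  apply/chain_belowP; split=> [|w /set1P->]; last exact: le_refl_in.
  by apply/is_chainP; split=> [|u v /set1P-> /set1P->]; rewrite ?sub1set ?le_refl_in.
have Qz : 0 < #|chain_below z| by apply/card_gt0P; exists [set z].
have [L bL maxL] := eq_bigmax_cond (fun C : {set T} => #|C|) Qz.
have rankE : rank A le z = #|L|.-1 by rewrite -maxL.
exists L; rewrite // rankE prednK // -maxL -(cards1 z).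
exact: (leq_bigmax_cond (P := chain_below z)).
Qed.

Lemma mem_longest_chain_below z L f :
  chain_below z L -> #|L| = (rank A le z).+1 ->
  f \in A -> le f z -> {in L, forall c, le c f || le f c} -> f \in L.
Proof.
move=> bL cardL fA lfz cmpf; apply/contraT => fL.
have /chain_belowP[cL lLz] := bL.
have : chain_below z (f |: L).
  apply/chain_belowP; split; first exact: chainU1.
  by move=> w /setU1P[->|/lLz].
by move/card_chain_below_le; rewrite cardsU1 fL cardL add1n ltnn.
Qed.

Lemma notin_chain_below x y (C : {set T}) :
  x \in A -> y \in A -> lt_rel le x y -> chain_below x C -> y \notin C.
Proof.
move=> xA yA /andP[nxy lxy] /chain_belowP[_ lCx].
by apply: contra nxy => yC; apply/eqP/le_anti_in => //; apply: lCx.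
Qed.

Lemma rank_lt x y :
  x \in A -> y \in A -> lt_rel le x y -> rank A le x < rank A le y.
Proof.
move=> xA yA ltxy; have [L bL cardL] := longest_chain_below xA.
have := card_chain_below_le (chain_below_setU1 xA yA (andP ltxy).2 bL).
by rewrite cardsU1 (notin_chain_below xA yA ltxy bL) cardL add1n ltnS.
Qed.

Lemma rank_min b : b \in A -> {in A, forall z, le b z} -> rank A le b = 0.
Proof.
move=> bA bmin.
have [L /chain_belowP[/is_chainP[sLA _] lLb] cardL] := longest_chain_below bA.
suff : #|L| <= 1 by rewrite cardL ltnS leqn0 => /eqP.
rewrite -(cards1 b); apply/subset_leq_card/subsetP => w wL; apply/set1P.
have wA := subsetP sLA w wL; exact: le_anti_in wA bA (lLb w wL) (bmin w wA).
Qed.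

Definition maximal_chain_below z (C : {set T}) : Prop :=
  chain_below z C /\ forall D, chain_below z D -> C \subset D -> D = C.

Lemma longest_maximal_chain_below z L :
  chain_below z L -> #|L| = (rank A le z).+1 -> maximal_chain_below z L.
Proof.
move=> bL cardL; split=> // D bD sLD; apply/eqP.
by rewrite eq_sym eqEcard sLD cardL card_chain_below_le.
Qed.

Lemma maximal_chain_below_mem z (C : {set T}) :
  z \in A -> maximal_chain_below z C -> z \in C.
Proof.
move=> zA [bC maxC].
have bzC := chain_below_setU1 zA zA (le_refl_in zA) bC.
by rewrite -(maxC _ bzC (subsetUr _ _)) setU11.
Qed.

Lemma chain_splice y (D E : {set T}) :
  chain_below y D -> is_chain A le E -> y \in E ->
  is_chain A le (D :|: [set e in E | ~~ le e y]).
Proof.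
move=> /chain_belowP[cD lDy] cE yE.
have /is_chainP[sEA cmpE] := cE; have /is_chainP[sDA cmpD] := cD.
have yA := subsetP sEA y yE.
have lDU c u : c \in D -> u \in [set e in E | ~~ le e y] -> le c u.
  move=> cD0 /setIdP[uE nuy]; have uA := subsetP sEA u uE.
  have lyu : le y u by move: (cmpE u y uE yE); rewrite (negbTE nuy).
  exact: le_trans_in (subsetP sDA c cD0) yA uA (lDy c cD0) lyu.
apply/is_chainP; split.
  by rewrite subUset sDA; apply/subsetP => u /setIdP[/(subsetP sEA)].
move=> u v /setUP[uD|uU] /setUP[vD|vU].
- exact: cmpD.
- by rewrite (lDU u v uD vU).
- by rewrite (lDU v u vD uU) orbT.
- by case/setIdP: uU => uE _; case/setIdP: vU => vE _; apply: cmpE.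
Qed.

Lemma maximal_chain_splice y (D E : {set T}) :
  maximal_chain_below y D -> is_maximal_chain A le E -> y \in E ->
  is_maximal_chain A le (D :|: [set e in E | ~~ le e y]).
Proof.
move=> mD mE yE; have [bD maxD] := mD; have /chain_belowP[_ lDy] := bD.
have /is_maximal_chainP[cE _] := mE; have /is_chainP[sEA _] := cE.
have yA := subsetP sEA y yE; have yD := maximal_chain_below_mem yA mD.
apply/is_maximal_chainP; split=> [|F cF sF]; first exact: chain_splice.
apply/eqP; rewrite eqEsubset sF andbT; apply/subsetP => f fF.
have /is_chainP[sFA cmpF] := cF; have fA := subsetP sFA f fF.
have inF := subsetP sF.
case lfy: (le f y).
  have bfD : chain_below y (f |: D).
    apply/chain_belowP; split; last by move=> w /setU1P[->|/lDy].
    have /andP[cD _] := bD.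
    by apply: chainU1 => // c cD0; apply: cmpF => //; apply: inF; rewrite inE cD0.
  by rewrite inE -(maxD _ bfD (subsetUr _ _)) setU11.
have yF : y \in F by apply: inF; rewrite inE yD.
have lyf : le y f by move: (cmpF y f yF fF); rewrite lfy orbF.
suff fE : f \in E by rewrite !inE fE lfy orbT.
apply: (maximal_chain_mem mE fA) => e eE.
case ley: (le e y); first by rewrite (le_trans_in (subsetP sEA e eE) yA fA ley lyf).
by apply: cmpF => //; apply: inF; rewrite !inE eE ley orbT.
Qed.

Section Graded.
Hypothesis graded : is_graded A le.

(* Splicing [D] and a longest chain below [y] onto the same maximal chain
   reduces the claim to gradedness. *)
Lemma card_maximal_chain_below y D :
  y \in A -> maximal_chain_below y D -> #|D| = (rank A le y).+1.
Proof.
move=> yA mD; have [L bL cardL] := longest_chain_below yA.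
have mL := longest_maximal_chain_below bL cardL.
have [E mE sLE] := maximal_chain_exists (andP bL).1.
have yE := subsetP sLE y (maximal_chain_below_mem yA mL).
have cardU C : maximal_chain_below y C ->
    #|C :|: [set e in E | ~~ le e y]| = #|C| + #|[set e in E | ~~ le e y]|.
  move=> [/chain_belowP[_ lCy] _]; apply/eqP; rewrite (leq_card_setU _ _).2.
  by rewrite disjoint_subset; apply/subsetP => w /lCy lwy; rewrite !inE lwy andbF.
have := graded (maximal_chain_splice mD mE yE) (maximal_chain_splice mL mE yE).
by rewrite !cardU // => /addIn ->.
Qed.

Lemma rank_cover x y :
  x \in A -> y \in A -> lt_rel le x y ->
  (forall z, z \in A -> le x z -> le z y -> z = x \/ z = y) ->
  rank A le y = (rank A le x).+1.
Proof.
move=> xA yA ltxy cover; have [L bL cardL] := longest_chain_below xA.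
have xL := maximal_chain_below_mem xA (longest_maximal_chain_below bL cardL).
have bL' := chain_below_setU1 xA yA (andP ltxy).2 bL.
suff /(card_maximal_chain_below yA) : maximal_chain_below y (y |: L).
  by rewrite cardsU1 (notin_chain_below xA yA ltxy bL) cardL => -[].
split=> // F bF sF; apply/eqP; rewrite eqEsubset sF andbT; apply/subsetP => f fF.
have /chain_belowP[/is_chainP[sFA cmpF] lFy] := bF.
have fA := subsetP sFA f fF; have inF := subsetP sF.
have xF : x \in F by apply: inF; rewrite setU1r.
case/orP: (cmpF f x fF xF) => [lfx|lxf].
  apply/setU1P; right; apply: mem_longest_chain_below bL cardL fA lfx _.
  by move=> c cL; apply: cmpF => //; apply: inF; rewrite setU1r.
by case: (cover f fA lxf (lFy f fF)) => ->; rewrite ?setU11 ?setU1r.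
Qed.

End Graded.

Section RankFunction.
Variables (r : T -> nat) (b t : T).
Hypotheses (bA : b \in A) (tA : t \in A).
Hypothesis bounds : {in A, forall z, le b z && le z t}.
Hypothesis r_b : r b = 0.
Hypothesis r_lt : {in A &, forall x y, lt_rel le x y -> r x < r y}.
Hypothesis r_gap : {in A &, forall x y, lt_rel le x y -> (r x).+1 < r y ->
  exists2 z, z \in A & lt_rel le x z && lt_rel le z y}.

Lemma rank_fun_le : {in A &, forall x y, le x y -> r x <= r y}.
Proof.
move=> x y xA yA lxy; case: (eqVneq x y) => [->//|nxy].
by apply/ltnW/r_lt; rewrite ///lt_rel nxy.
Qed.

Lemma chain_le_of_rank_fun (C : {set T}) c e :
  is_chain A le C -> c \in C -> e \in C -> r c <= r e -> le c e.
Proof.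
move=> /is_chainP[sCA cmp] cC eC rce; have cA := subsetP sCA c cC.
case/orP: (cmp c e cC eC) => // lec; case: (eqVneq e c) => [->|nec].
  exact: le_refl_in.
have := r_lt (subsetP sCA e eC) cA; rewrite /lt_rel nec lec => /(_ isT).
by rewrite ltnNge rce.
Qed.

Lemma chain_rank_fun_inj (C : {set T}) : is_chain A le C -> {in C &, injective r}.
Proof.
move=> cC c e cC' eC rce; have /is_chainP[sCA _] := cC.
apply: (le_anti_in (subsetP sCA c cC') (subsetP sCA e eC));
  by apply: (chain_le_of_rank_fun cC) => //; rewrite rce.
Qed.

Lemma card_chain_below_le_rank_fun z (C : {set T}) :
  z \in A -> chain_below z C -> #|C| <= (r z).+1.
Proof.
move=> zA /chain_belowP[cC lCz]; have /is_chainP[sCA _] := cC.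
apply: card_le_inj_bounded (chain_rank_fun_inj cC) _ => c cC'.
exact: rank_fun_le (subsetP sCA c cC') zA (lCz c cC').
Qed.

(* A maximal chain meets every rank: above an element of rank k, the element of
   the chain of least rank has rank k + 1, for otherwise [r_gap] would produce
   an element comparable with the whole chain but missing from it. *)
Lemma maximal_chain_rank_fun_onto (C : {set T}) k :
  is_maximal_chain A le C -> k <= r t -> exists2 c, c \in C & r c = k.
Proof.
move=> mC; have /is_maximal_chainP[chainC _] := mC; have /is_chainP[sCA _] := chainC.
elim: k => [|k IH] kt.
  exists b => //; apply: (maximal_chain_mem mC bA) => c /(subsetP sCA).
  by move=> /bounds/andP[-> _]; rewrite orbT.
have [c cC rc] := IH (ltnW kt); have cA := subsetP sCA c cC.
have tC : t \in C.
  by apply: (maximal_chain_mem mC tA) => e /(subsetP sCA)/bounds/andP[_ ->].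
have Qt : (t \in C) && (r c < r t) by rewrite tC rc.
have [u /andP[uC rcu] umin] :=
  arg_minnP (P := fun e => (e \in C) && (r c < r e)) r Qt.
have uA := subsetP sCA u uC.
exists u => //; apply/eqP; rewrite eqn_leq -rc rcu andbT leqNgt; apply/negP => gap.
have lcu : lt_rel le c u.
  rewrite /lt_rel (chain_le_of_rank_fun chainC) ?(ltnW rcu) // andbT.
  by apply: contraTneq rcu => ->; rewrite ltnn.
have [w wA /andP[lcw lwu]] := r_gap cA uA lcu gap.
have wC : w \in C.
  apply: (maximal_chain_mem mC wA) => e eC; have eA := subsetP sCA e eC.
  case: (leqP (r e) (r c)) => [rec|rce].
    have lec := chain_le_of_rank_fun chainC eC cC rec.
    by rewrite (le_trans_in eA cA wA lec (andP lcw).2).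
  have rue : r u <= r e by apply: umin; rewrite eC rce.
  have lue := chain_le_of_rank_fun chainC uC eC rue.
  by rewrite (le_trans_in wA uA eA (andP lwu).2 lue) orbT.
have := umin w; rewrite wC (r_lt cA wA lcw) => /(_ isT).
by rewrite leqNgt (r_lt wA uA lwu).
Qed.

Lemma rank_eq_rank_fun z : z \in A -> rank A le z = r z.
Proof.
move=> zA; have [L bL cardL] := longest_chain_below zA.
apply/eqP; rewrite eqn_leq -ltnS -cardL card_chain_below_le_rank_fun //=.
have zL := maximal_chain_below_mem zA (longest_maximal_chain_below bL cardL).
have [E mE sLE] := maximal_chain_exists (andP bL).1.
have /is_maximal_chainP[chainE _] := mE; have zE := subsetP sLE z zL.
have bD : chain_below z [set e in E | le e z].
  apply/chain_belowP; split=> [|w /setIdP[] //].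
  by apply: sub_chain chainE _; apply/subsetP => e /setIdP[].
rewrite -ltnS; apply: leq_trans (card_chain_below_le bD).
apply: (card_ge_onto (r := r)) => k kz.
have kt := leq_trans kz (rank_fun_le zA tA (andP (bounds zA)).2).
have [c cE rc] := maximal_chain_rank_fun_onto mE kt.
by exists c => //; rewrite inE cE (chain_le_of_rank_fun chainE cE zE) ?rc.
Qed.

Lemma graded_of_rank_fun : is_graded A le.
Proof.
suff cardC C : is_maximal_chain A le C -> #|C| = (r t).+1.
  by move=> C D /cardC -> /cardC ->.
move=> mC; have /is_maximal_chainP[cC _] := mC; have /is_chainP[sCA _] := cC.
apply/eqP; rewrite eqn_leq (card_ge_onto (r := r)) ?andbT => [|k]; last first.
  exact: maximal_chain_rank_fun_onto.
apply: card_le_inj_bounded (chain_rank_fun_inj cC) _ => c /(subsetP sCA) cA.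
exact: rank_fun_le cA tA (andP (bounds cA)).2.
Qed.

Lemma Eulerian_of_rank_fun :
  {in A &, forall x y, lt_rel le x y ->
     (\sum_(z in A | le x z && le z y) sgn (r z))%R = 0%R} ->
  Eulerian A le.
Proof.
move=> sum0; split=> //; first by exists b => //; exists t.
  exact: graded_of_rank_fun.
move=> x y xA yA ltxy; apply/eqP.
rewrite -(sum_sgn_eq0 _ (fun z => le x z && le z y)).
rewrite (eq_bigr (fun z => sgn (r z))) => [|z /andP[zA _]]; first exact/eqP/sum0.
by rewrite rank_eq_rank_fun.
Qed.

End RankFunction.

End Poset.

Local Open Scope order_scope.

Lemma lt_rel_le d (P : finPOrderType d) (x y : P) : lt_rel <=%O x y = (x < y).
Proof. by rewrite /lt_rel lt_neqAle. Qed.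

Section OrderRank.
Variables (d : Order.disp_t) (P : finPOrderType d).
Local Notation rho := (rank [set: P] <=%O).

Lemma order_is_poset : is_poset [set: P] <=%O.
Proof.
split=> [x _|x y _ _ lxy lyx|x y z _ _ _]; first exact: le_refl.
  by apply/le_anti; rewrite lxy lyx.
exact: le_trans.
Qed.

Lemma rank_lt_order (x y : P) : x < y -> (rho x < rho y)%N.
Proof. by move=> ltxy; apply: (rank_lt order_is_poset); rewrite ?inE ?lt_rel_le. Qed.

Lemma rank_le_order (x y : P) : x <= y -> (rho x <= rho y)%N.
Proof. by rewrite le_eqVlt => /predU1P[->|/rank_lt_order/ltnW]. Qed.

Lemma rank_gap_order : is_graded [set: P] <=%O ->
  forall x y : P, x < y -> ((rho x).+1 < rho y)%N -> exists2 z, x < z & z < y.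
Proof.
move=> grP x y ltxy.
have [/existsP[z /andP[xz zy]] _|no_z] := boolP [exists z, (x < z) && (z < y)].
  by exists z.
rewrite (@rank_cover _ _ _ order_is_poset grP x y) ?inE ?lt_rel_le ?ltnn //.
move=> z _ lxz lzy.
have [->|nzx] := eqVneq z x; first by left.
have [->|nzy] := eqVneq z y; first by right.
move: no_z => /existsPn/(_ z).
by rewrite [x < z]lt_def [z < y]lt_neqAle nzx nzy lxz lzy.
Qed.

Lemma sum_sgn_rank_interval : Eulerian [set: P] <=%O -> forall x y : P,
  (\sum_(z : P | (x <= z <= y)%O) sgn (rho z))%R =
  if x == y then sgn (rho x) else 0%R.
Proof.
move=> [_ _ _ eul] x y; have [<-|nxy] := eqVneq x y.
  by rewrite (big_pred1 x) // => z; rewrite /= -eq_le eq_sym.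
have [lxy|nlxy] := boolP (x <= y); last first.
  by rewrite big_pred0 // => z; apply: contraNF nlxy => /andP[/le_trans]; apply.
transitivity (\sum_(z in [set: P] | (x <= z <= y)%O) sgn (rho z))%R.
  by apply: eq_bigl => z; rewrite inE.
apply/eqP; rewrite sum_sgn_eq0.
by apply/eqP/eul; rewrite ?inE ?lt_rel_le ?lt_neqAle ?nxy.
Qed.

End OrderRank.

Lemma Bier_poset d (P : finPOrderType d) (I : {set P}) :
  is_poset (Bier_carrier I) (@Bier_le d P).
Proof.
split.
- by move=> [[a c]|] _ //=; rewrite !le_refl.
- move=> [[a c]|] [[a' c']|] _ _ //= /andP[laa' lc'c] /andP[la'a lcc'].
  by rewrite (@le_anti _ _ a a') ?laa' ?la'a // (@le_anti _ _ c c') ?lcc' ?lc'c.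
- move=> [[a c]|] [[a' c']|] [[a'' c'']|] _ _ _ //= /andP[l1 l2] /andP[l3 l4].
  by rewrite (le_trans l1 l3) (le_trans l4 l2).
Qed.

Lemma sum_option (R : zmodType) (X : finType) (p : pred (option X))
    (F : option X -> R) :
  (\sum_(w | p w) F w =
   (if p None then F None else 0) + \sum_(x | p (Some x)) F (Some x))%R.
Proof.
rewrite big_mkcond (bigD1 None) //=; congr (_ + _)%R.
rewrite (reindex_omap Some id) => [|[x|] //].
by rewrite [RHS]big_mkcond; apply: eq_bigl => x /=; rewrite eqxx.
Qed.

Lemma lt_of_in_notin d (P : finPOrderType d) (I : {set P}) (x y : P) :
  x \in I -> y \notin I -> x <= y -> x < y.
Proof.
by move=> xI yI; rewrite le_eqVlt => /predU1P[exy|//]; rewrite -exy xI in yI.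
Qed.

Section BierRank.
Variables (d : Order.disp_t) (P : finPOrderType d) (I : {set P}).
Hypothesis I_down : forall x y : P, y \in I -> x <= y -> x \in I.
Variables (rho : P -> nat) (n : nat).
Hypothesis rho_lt : forall x y : P, x < y -> (rho x < rho y)%N.
Hypothesis rho_gap :
  forall x y : P, x < y -> ((rho x).+1 < rho y)%N -> exists2 z, x < z & z < y.
Hypothesis rho_le_n : forall z, (rho z <= n)%N.
Hypothesis sum_sgn_rho : forall x y : P,
  (\sum_(z : P | (x <= z <= y)%O) sgn (rho z))%R =
  if x == y then sgn (rho x) else 0%R.

Local Notation B := (Bier_carrier I).
Local Notation Ble := (@Bier_le d P).

Let rho_le x y : x <= y -> (rho x <= rho y)%N.
Proof. by rewrite le_eqVlt => /predU1P[->|/rho_lt/ltnW]. Qed.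

Let lt_of_rank_lt x y : x <= y -> (rho x < rho y)%N -> x < y.
Proof.
move=> lxy ltr; rewrite lt_neqAle lxy andbT.
by apply: contraTneq ltr => ->; rewrite ltnn.
Qed.

Let notin_up (x y : P) : y \notin I -> y <= x -> x \notin I.
Proof. by move=> yI lyx; apply: contra yI => /I_down; apply. Qed.

Definition Bier_rank (w : option (P * P)) : nat :=
  if w is Some (a, c) then rho a + (n - rho c) else n.

Lemma Bier_lt_Some (a c a' c' : P) :
  lt_rel Ble (Some (a, c)) (Some (a', c')) =
  [&& (a != a') || (c != c'), a <= a' & c' <= c].
Proof. by rewrite /lt_rel /= (inj_eq (@Some_inj _)) xpair_eqE negb_and. Qed.

Lemma Bier_rank_lt :
  {in B &, forall u v, lt_rel Ble u v -> (Bier_rank u < Bier_rank v)%N}.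
Proof.
move=> [[a c]|] [[a' c']|] //; rewrite !inE.
- move=> _ _; rewrite Bier_lt_Some => /and3P[neq laa' lc'c] /=.
  have ltB : (rho a < rho a')%N || (rho c' < rho c)%N.
    case/orP: neq => [naa'|ncc']; first by rewrite rho_lt // lt_neqAle naa'.
    by rewrite (rho_lt (x := c')) ?orbT // lt_neqAle eq_sym ncc'.
  have := rho_le laa'; have := rho_le lc'c; have := rho_le_n c; lia.
- move=> /and3P[aI cI lac] _ _ /=.
  have := rho_lt (lt_of_in_notin aI cI lac); have := rho_le_n c; lia.
Qed.

Lemma Bier_rank_gap_Some (a c a' c' : P) :
  Some (a, c) \in B -> Some (a', c') \in B ->
  lt_rel Ble (Some (a, c)) (Some (a', c')) ->
  ((Bier_rank (Some (a, c))).+1 < Bier_rank (Some (a', c')))%N ->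
  exists2 w, w \in B & lt_rel Ble (Some (a, c)) w && lt_rel Ble w (Some (a', c')).
Proof.
rewrite !inE Bier_lt_Some /=.
move=> /and3P[aI cI lac] /and3P[a'I c'I la'c'] /and3P[_ laa' lc'c].
have := rho_le laa'; have := rho_le lc'c; have := rho_le_n c; have := rho_le_n c'.
move=> c'n cn rc'c raa' gap.
have [gap_a|] := ltnP (rho a).+1 (rho a').
  have [z ltaz ltza'] := rho_gap (lt_of_rank_lt laa' (ltnW gap_a)) gap_a.
  exists (Some (z, c)).
    rewrite inE (I_down a'I (ltW ltza')) cI.
    exact: le_trans (ltW ltza') (le_trans la'c' lc'c).
  rewrite !Bier_lt_Some (lt_eqF ltaz) (lt_eqF ltza') (ltW ltaz) (ltW ltza').
  by rewrite lc'c le_refl.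
have [gap_c|] := ltnP (rho c').+1 (rho c).
  have [z ltc'z ltzc] := rho_gap (lt_of_rank_lt lc'c (ltnW gap_c)) gap_c.
  exists (Some (a', z)).
    by rewrite inE a'I (notin_up c'I (ltW ltc'z)) (le_trans la'c' (ltW ltc'z)).
  rewrite !Bier_lt_Some (gt_eqF ltzc) (gt_eqF ltc'z) (ltW ltzc) (ltW ltc'z).
  by rewrite laa' le_refl !orbT.
move=> small_c small_a.
have ltaa' : a < a' by apply: lt_of_rank_lt laa' _; lia.
have ltc'c : c' < c by apply: lt_of_rank_lt lc'c _; lia.
exists (Some (a', c)); first by rewrite inE a'I cI (le_trans la'c' lc'c).
by rewrite !Bier_lt_Some (lt_eqF ltaa') (gt_eqF ltc'c) laa' lc'c !le_refl !eqxx.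
Qed.

Lemma Bier_rank_gap_top (a c : P) :
  Some (a, c) \in B -> ((Bier_rank (Some (a, c))).+1 < n)%N ->
  exists2 w, w \in B & lt_rel Ble (Some (a, c)) w && lt_rel Ble w None.
Proof.
rewrite inE /= => /and3P[aI cI lac] gap.
have ltac : a < c := lt_of_in_notin aI cI lac.
have [z ltaz ltzc] : exists2 z, a < z & z < c.
  by apply: rho_gap ltac _; have := rho_le_n c; lia.
have [zI|zI] := boolP (z \in I).
  exists (Some (z, c)); first by rewrite inE zI cI (ltW ltzc).
  by rewrite Bier_lt_Some (lt_eqF ltaz) (ltW ltaz) le_refl.
exists (Some (a, z)); first by rewrite inE aI zI (ltW ltaz).
by rewrite Bier_lt_Some (gt_eqF ltzc) (ltW ltzc) le_refl orbT.
Qed.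

Lemma Bier_rank_gap :
  {in B &, forall u v, lt_rel Ble u v -> ((Bier_rank u).+1 < Bier_rank v)%N ->
     exists2 w, w \in B & lt_rel Ble u w && lt_rel Ble w v}.
Proof.
move=> [[a c]|] [[a' c']|] //; first exact: Bier_rank_gap_Some.
by move=> uB _ _; apply: Bier_rank_gap_top.
Qed.

Lemma Bier_sum_Some (a c a' c' : P) :
  Some (a, c) \in B -> Some (a', c') \in B ->
  lt_rel Ble (Some (a, c)) (Some (a', c')) ->
  (\sum_(w in B | Ble (Some (a, c)) w && Ble w (Some (a', c'))) sgn (Bier_rank w))%R
    = 0%R.
Proof.
rewrite !inE Bier_lt_Some /=.
move=> /and3P[aI cI lac] /and3P[a'I c'I la'c'] /and3P[neq laa' lc'c].
rewrite sum_option /= andbF add0r.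
transitivity ((\sum_(x : P | (a <= x <= a')%O) sgn (rho x)) * sgn n *
              (\sum_(y : P | (c' <= y <= c)%O) sgn (rho y)))%R.
  rewrite big_distrl big_distrlr pair_big_dep /=.
  apply: eq_big => [[x y]|[x y] _] /=; last by rewrite sgnD sgnB ?rho_le_n ?mulrA.
  rewrite inE; apply/idP/idP => [/andP[_ /andP[/andP[-> ->] /andP[-> ->]]] //|].
  move=> /andP[/andP[lax lxa'] /andP[lc'y lyc]].
  rewrite lax lxa' lc'y lyc (I_down a'I lxa') (notin_up c'I lc'y) /= andbT.
  exact: le_trans lxa' (le_trans la'c' lc'y).
rewrite !sum_sgn_rho; have [eaa'|] := eqVneq a a'; last by rewrite !mul0r.
by have [ecc'|] := eqVneq c' c; [rewrite eaa' ecc' !eqxx in neq | rewrite mulr0].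
Qed.

Lemma sum_sgn_interval_notin (x c : P) :
  x \in I -> c \notin I ->
  (\sum_(y : P | (x <= y <= c)%O && (y \notin I)) sgn (rho y) =
   - \sum_(y : P | (x <= y <= c)%O && (y \in I)) sgn (rho y))%R.
Proof.
move=> xI cI; have := sum_sgn_rho x c; rewrite (bigID (fun y => y \in I)) /=.
have -> : (x == c) = false by apply: contraNF cI => /eqP <-.
by move/eqP; rewrite addr_eq0 => /eqP ->; rewrite opprK.
Qed.

Lemma sum_sgn_pairs_in_ideal (a c : P) :
  a \in I -> a <= c ->
  (\sum_(x : P | (x \in I) && (a <= x)%O)
     \sum_(y : P | (x <= y <= c)%O && (y \in I)) sgn (rho x) * sgn (rho y) = 1)%R.
Proof.
move=> aI lac.
rewrite (exchange_big_dep (fun y => (y \in I) && (y <= c)%O)) /=; last first.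
  by move=> x y _ /andP[/andP[_ ->] ->].
transitivity (\sum_(y : P | (y \in I) && (y <= c)%O)
  (if a == y then sgn (rho a) else 0) * sgn (rho y))%R.
  apply: eq_bigr => y /andP[yI lyc]; rewrite -sum_sgn_rho big_distrl /=.
  apply: eq_bigl => x; rewrite yI lyc !andbT andbC.
  by case lxy: (x <= y)%O; rewrite ?andbF ?andbT //= (I_down yI lxy).
rewrite (bigD1 a) ?aI ?lac //= eqxx sgn_sq big1 ?addr0 // => y /andP[_ nya].
by rewrite eq_sym (negbTE nya) mul0r.
Qed.

Lemma Bier_sum_top (a c : P) :
  Some (a, c) \in B ->
  (\sum_(w in B | Ble (Some (a, c)) w && Ble w None) sgn (Bier_rank w))%R = 0%R.
Proof.
rewrite inE /= => /and3P[aI cI lac].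
rewrite sum_option /= inE /=.
transitivity (sgn n * (1 + \sum_(x : P | (x \in I) && (a <= x)%O)
  \sum_(y : P | (x <= y <= c)%O && (y \notin I)) sgn (rho x) * sgn (rho y)))%R.
  rewrite mulrDr mulr1; congr (_ + _)%R.
  rewrite big_distrr /=; under [RHS]eq_bigr do rewrite big_distrr.
  rewrite pair_big_dep /=; apply: eq_big => [[x y]|[x y] _] /=.
    by rewrite inE; case: (x \in I); case: (y \in I);
      case: (x <= y)%O; case: (a <= x)%O; case: (y <= c)%O.
  by rewrite sgnD sgnB ?rho_le_n // mulrCA.
rewrite (eq_bigr (fun x => - (sgn (rho x) *
  \sum_(y : P | (x <= y <= c)%O && (y \in I)) sgn (rho y))))%R; last first.
  by move=> x /andP[xI _]; rewrite -big_distrr /= sum_sgn_interval_notin // mulrN.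
rewrite sumrN; under eq_bigr do rewrite big_distrr.
by rewrite sum_sgn_pairs_in_ideal // addrN mulr0.
Qed.

Lemma Bier_interval_sum :
  {in B &, forall u v, lt_rel Ble u v ->
     (\sum_(w in B | Ble u w && Ble w v) sgn (Bier_rank w))%R = 0%R}.
Proof.
move=> [[a c]|] [[a' c']|] //; first exact: Bier_sum_Some.
by move=> uB _ _; apply: Bier_sum_top.
Qed.

End BierRank.

Lemma proper_ideal_bounds d (P : finPOrderType d) (I : {set P}) (b t : P) :
  proper_ideal I -> (forall z, b <= z <= t) -> b \in I /\ t \notin I.
Proof.
move=> [I0 IT I_down] bounds; split.
  by have [x xI] := set0Pn _ I0; apply: I_down xI _; case/andP: (bounds x).
apply: contra IT => tI; apply/eqP/setP => z.
by rewrite inE (I_down z t tI); case/andP: (bounds z).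
Qed.

Theorem theorem6 (d : Order.disp_t) (P : finPOrderType d) (I : {set P}) :
  Eulerian [set: P] (<=%O : rel P) ->
  proper_ideal I ->
  Eulerian (Bier_carrier I) (@Bier_le d P).
Proof.
move=> euP pI; have [_ [b0 _ [t0 _ bt]] grP _] := euP.
have bounds z : b0 <= z <= t0 by apply: bt; rewrite inE.
have [b0I t0I] := proper_ideal_bounds pI bounds; have [_ _ I_down] := pI.
pose rho := rank [set: P] <=%O.
have rho_le_n z : (rho z <= rho t0)%N by apply: rank_le_order; case/andP: (bounds z).
apply: (@Eulerian_of_rank_fun _ _ _ (Bier_poset I) (Bier_rank rho (rho t0))
          (Some (b0, t0)) None).
- by rewrite inE b0I t0I; case/andP: (bounds t0).
- by rewrite inE.
- by move=> [[a c]|] _ //=; rewrite (andP (bounds a)).1 (andP (bounds c)).2.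
- rewrite /rho /= (rank_min (order_is_poset P)) ?subnn ?inE // => z _.
  by case/andP: (bounds z).
- exact: (Bier_rank_lt (@rank_lt_order d P) rho_le_n).
- exact: (Bier_rank_gap I_down (@rank_lt_order d P) (rank_gap_order grP) rho_le_n).
- exact: (Bier_interval_sum I_down rho_le_n (sum_sgn_rank_interval euP)).
Qed.
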